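(* Let $N\ge1$, $T>0$, $M>0$, and consider the problem of minimizing $\mathbb V(T)=\frac1N\sum_{i=1}^N\xi_i(T)^2$ over $\alpha\in\mathcal U_M$, where $\xi$ solves $\dot\xi_i=-\xi_i+(1-\alpha_i)\bar\xi$, $\bar\xi=\frac1N\sum_j\xi_j$, with fixed initial datum satisfying $\bar\xi(0)>0$ and $\xi_1(0)\ge\xi_2(0)\ge\dots\ge\xi_N(0)$. Then there exists an optimal control whose trajectory satisfies: for all $t\in[0,T]$ and all $i<j$, $\xi_i(t)\ge\xi_j(t)$.
   Context: $\mathcal U_M$ is the set of measurable $\alpha:[0,T]\to[0,1]^N$ with $\sum_i\alpha_i(t)\le M$ for all $t$. An optimal control for this problem exists. *)

From HB Require Import structures.
From mathcomp Require Import all_boot all_order all_algebra.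
From mathcomp Require Import all_classical all_reals all_analysis.
Set Implicit Arguments. Unset Strict Implicit. Unset Printing Implicit Defensive.
Import Order.TTheory GRing.Theory Num.Theory.
Local Open Scope classical_set_scope.
Local Open Scope ring_scope.

Definition mean (R : realType) (N : nat) (x : 'I_N -> R) : R :=
  N%:R^-1 * \sum_(j < N) x j.

Definition Vfun (R : realType) (N : nat) (x : 'I_N -> R) : R :=
  N%:R^-1 * \sum_(i < N) x i ^+ 2.

Definition admissible (R : realType) (N : nat) (T M : R)
  (a : R -> 'I_N -> R) : Prop :=
  (forall i : 'I_N, measurable_fun `[0, T] (fun t => a t i)) /\
  (forall t, 0 <= t <= T ->
     (forall i : 'I_N, 0 <= a t i <= 1) /\ \sum_(i < N) a t i <= M).

Definition rhs (R : realType) (N : nat) (a : R -> 'I_N -> R)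
  (xi : R -> 'I_N -> R) (i : 'I_N) (s : R) : R :=
  - xi s i + (1 - a s i) * mean (xi s).

Definition is_solution (R : realType) (N : nat) (T : R) (xi0 : 'I_N -> R)
  (a : R -> 'I_N -> R) (xi : R -> 'I_N -> R) : Prop :=
  forall (i : 'I_N) (t : R), 0 <= t <= T ->
    (@lebesgue_measure R).-integrable `[0%R, t]%classic (EFin \o rhs a xi i) /\
    (xi t i - xi0 i)%:E =
       (\int[@lebesgue_measure R]_(s in `[0%R, t]%classic) (rhs a xi i s)%:E)%E.

Definition optimal (R : realType) (N : nat) (T M : R) (xi0 : 'I_N -> R)
  (a : R -> 'I_N -> R) (xi : R -> 'I_N -> R) : Prop :=
  admissible T M a /\ is_solution T xi0 a xi /\
  forall (b : R -> 'I_N -> R) (eta : R -> 'I_N -> R),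
    admissible T M b -> is_solution T xi0 b eta ->
    Vfun (xi T) <= Vfun (eta T).

From mathcomp Require Import all_boot all_order all_algebra.
From mathcomp Require Import all_classical all_reals all_analysis.
From mathcomp Require Import ring lra measurable_realfun perm.
Set Implicit Arguments. Unset Strict Implicit. Unset Printing Implicit Defensive.
Import Order.TTheory GRing.Theory Num.Theory.
Import numFieldNormedType.Exports.
Local Open Scope classical_set_scope.
Local Open Scope ring_scope.

(* Sort the optimal trajectory and its control pointwise in time by a
   selection-sort network of conditional swaps: at every time s where
   xi_i(s) < xi_j(s) with i < j, exchange the labels i and j in both.  The
   dynamics and the constraints are invariant under relabelling and V is
   symmetric, so each swap keeps admissibility and the cost; what needs proof
   is that the swapped trajectory is again a Caratheodory solution.  With
   D = xi_j - xi_i the swapped coordinates are xi_i + max(D, 0) and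
   xi_j - max(D, 0), so this is the chain rule
   max(D t, 0) = max(D 0, 0) + int_0^t 1_{D > 0} D'  for absolutely continuous D.
   Its defect has increments locally, hence (by a sup argument) globally,
   bounded by twice the mass of |D'| on {0 < D < del}, which vanishes with del
   by dominated convergence. *)

Section RightNondecreasing.
Context {R : realType}.

Lemma right_nondecreasing_le (G : R -> R) (a b : R) : a <= b ->
  (forall y, a < y -> y <= b -> forall e : R, 0 < e -> exists2 del : R, 0 < del &
     forall x, a <= x -> x <= y -> y - x < del -> `|G y - G x| < e) ->
  (forall s, a <= s -> s < b -> exists2 eta : R, 0 < eta &
     forall y, s <= y -> y <= b -> y - s < eta -> G s <= G y) ->
  G a <= G b.
Proof.
move=> ab G_lcont G_rincr.
pose S := [set y | a <= y <= b /\ forall w, a <= w <= y -> G a <= G w].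
have Sa : S a by split=> [|w]; [rewrite lexx ab | rewrite -eq_le => /eqP <-].
have hS : has_sup S by split; [exists a | exists b => y [/andP[_ ->]]].
set y := sup S.
have ay : a <= y by exact: sup_upper_bound.
have yb : y <= b by apply: ge_sup => [|z [/andP[_ ->]]]; first exists a.
have Sy : S y.
  split=> [|w /andP[aw]]; first by rewrite ay yb.
  rewrite le_eqVlt => /orP[/eqP ->|wy]; last first.
    have [z [_ Gz] yz] := sup_adherent (ltac:(by rewrite subr_gt0) : 0 < y - w) hS.
    by apply: Gz; rewrite aw /=; rewrite -/y in yz; lra.
  have [ya|ay'] := leP y a; first by have <- : a = y by apply/le_anti; rewrite ay ya.
  apply/ler_addgt0Pr => e e0.
  have [del del0 Gy] := G_lcont y ay' yb e e0.
  have [z Sz yz] := sup_adherent del0 hS.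
  have zy : z <= y := sup_upper_bound hS Sz.
  have [/andP[az _] Gz] := Sz.
  rewrite -/y in yz.
  have := Gz z; rewrite az lexx => /(_ isT) Gaz.
  have := Gy z az zy ltac:(lra); rewrite ltr_norml => /andP[+ _]; lra.
have [by_|yb'] := leP b y.
  have <- : y = b by apply/le_anti; rewrite yb by_.
  by case: Sy => _; apply; rewrite ay lexx.
have [eta eta0 Gy] := G_rincr y ay yb'.
pose m := Num.min eta (b - y).
have m0 : 0 < m by rewrite lt_min eta0 subr_gt0.
have [meta mby] : m <= eta /\ m <= b - y by split; rewrite ge_min lexx ?orbT.
have : S (y + m / 2).
  split=> [|w /andP[aw wy']]; first by apply/andP; split; lra.
  have [wy|yw] := leP w y; first by case: Sy => _; apply; rewrite aw wy.
  case: Sy => _ /(_ y); rewrite ay lexx => /(_ isT) Gay.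
  by apply: le_trans Gay (Gy w _ _ _); lra.
move=> /(sup_upper_bound hS); rewrite -/y; lra.
Qed.

End RightNondecreasing.

Section PositivePart.
Context {R : realType}.
Local Notation mu := (@lebesgue_measure R).

Lemma integral_itv_abs_small (T : R) (g : R -> R) :
  mu.-integrable `[0, T] (EFin \o g) ->
  forall e : R, 0 < e -> exists2 del : R, 0 < del &
    forall x y, 0 <= x -> x <= y -> y <= T -> y - x < del ->
      \int[mu]_(s in `]x, y]) `|g s| < e.
Proof.
move=> ig e e0.
have igT : mu.-integrable setT (EFin \o (g \_ `[0, T])).
  by rewrite -restrict_EFin; apply/integrable_restrict => //=; rewrite setTI.
have [del [del0 small]] := integral_normr_continuous igT e0.
exists del => // x y x0 xy yT yx.
have mxy : (mu `]x, y]%classic < del%:E)%E.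
  by rewrite lebesgue_measure_itv /= lte_fin; case: ifPn => // _; rewrite -EFinD lte_fin.
have := small _ (measurable_itv `]x, y]) mxy.
congr (_ < _); apply: eq_Rintegral => s; rewrite inE /= in_itv /= => /andP[xs sy].
by rewrite patchE ifT // inE /= in_itv /= (le_trans x0 (ltW xs)) (le_trans sy yT).
Qed.

Lemma Rintegral_itv_split (T : R) (g : R -> R) x y :
  mu.-integrable `[0, T] (EFin \o g) -> 0 <= x -> x <= y -> y <= T ->
  \int[mu]_(s in `[0, y]) g s =
  \int[mu]_(s in `[0, x]) g s + \int[mu]_(s in `]x, y]) g s.
Proof.
move=> ig x0 xy yT.
have igy : mu.-integrable `[0, y] (EFin \o g).
  by apply: integrableS ig => //; apply: subset_itvl; rewrite bnd_simp.
have := @Rintegral_itvB R g (BLeft 0) (BRight y) x igy.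
by rewrite !bnd_simp => /(_ x0 xy) <-; rewrite addrC subrK.
Qed.

Lemma integrable_itv_oc (T : R) (g : R -> R) x y :
  mu.-integrable `[0, T] (EFin \o g) -> 0 <= x -> y <= T ->
  mu.-integrable `]x, y] (EFin \o g).
Proof.
move=> ig x0 yT; apply: integrableS ig => //.
by apply: subset_itvScc; rewrite bnd_simp.
Qed.

Lemma dist_maxr0_le (a b : R) : `|Num.max a 0 - Num.max b 0| <= `|a - b|.
Proof.
have h1 := ler_norm (a - b).
have h2 : b - a <= `|a - b| by rewrite distrC ler_norm.
by case: (leP a 0) => ha; case: (leP b 0) => hb; rewrite ler_norml; apply/andP; split; lra.
Qed.

Variables (T D0 : R) (d D : R -> R).
Hypotheses (T_ge0 : 0 <= T) (d_int : mu.-integrable `[0, T] (EFin \o d))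
  (DE : forall t, 0 <= t -> t <= T -> D t = D0 + \int[mu]_(s in `[0, t]) d s).

Lemma primitiveB x y : 0 <= x -> x <= y -> y <= T ->
  D y - D x = \int[mu]_(s in `]x, y]) d s.
Proof.
move=> x0 xy yT.
rewrite DE ?(le_trans x0 xy) // DE ?(le_trans xy yT) //.
rewrite (Rintegral_itv_split d_int x0 xy yT); lra.
Qed.

Lemma primitive_cont s (e : R) : 0 <= s -> s <= T -> 0 < e ->
  exists2 del : R, 0 < del &
    forall w, 0 <= w -> w <= T -> `|w - s| < del -> `|D w - D s| < e.
Proof.
move=> s0 sT e0; have [del del0 small] := integral_itv_abs_small d_int e0.
have near x y : 0 <= x -> x <= y -> y <= T -> y - x < del -> `|D y - D x| < e.
  move=> x0 xy yT yx; rewrite primitiveB //.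
  apply: le_lt_trans (small x y x0 xy yT yx).
  by apply: le_normr_Rintegral => //; exact: integrable_itv_oc d_int x0 yT.
exists del => // w w0 wT; have [ws|sw] := leP w s.
  by rewrite distrC ger0_norm ?subr_ge0 // distrC; exact: near.
by rewrite ger0_norm ?subr_ge0 ?ltW //; apply: near => //; exact: ltW.
Qed.

Lemma measurable_primitive : measurable_fun `[0, T] D.
Proof.
have mint : measurable_fun `[0, T] (fun x => parameterized_integral mu 0 x d).
  exact: (subspace_continuous_measurable_fun (measurable_itv _)
            (parameterized_integral_continuous T_ge0 d_int)).
apply: (eq_measurable_fun (fun x => D0 + parameterized_integral mu 0 x d)).
  by move=> x; rewrite inE /= in_itv /= => /andP[x0 xT]; rewrite DE.
by apply: measurable_funD => //; exact: measurable_cst.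
Qed.

Lemma last_nonpos s y : 0 <= s -> s <= y -> y <= T -> D s <= 0 ->
  exists z, [/\ s <= z, z <= y, D z <= 0 & forall w, z < w -> w <= y -> 0 < D w].
Proof.
move=> s0 sy yT Ds.
pose S := [set z | s <= z <= y /\ D z <= 0].
have Ss : S s by split; rewrite ?lexx ?sy.
have hS : has_sup S by split; [exists s | exists y => z [/andP[_ ->]]].
set z := sup S.
have sz : s <= z := sup_upper_bound hS Ss.
have zy : z <= y by apply: ge_sup => [|w [/andP[_ ->]]]; first exists s.
have Dz : D z <= 0.
  rewrite leNgt; apply/negP => Dz0.
  have [del del0 Dcont] := primitive_cont (le_trans s0 sz) (le_trans zy yT) Dz0.
  have [w Sw zw] := sup_adherent del0 hS.
  have wz : w <= z := sup_upper_bound hS Sw.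
  have [/andP[sw wy] Dw] := Sw.
  rewrite -/z in zw.
  have := Dcont w (le_trans s0 sw) (le_trans wy yT).
  rewrite ler0_norm ?subr_le0 // => /(_ ltac:(lra)).
  rewrite ltr_norml => /andP[+ _]; lra.
exists z; split => // w zw wy; rewrite ltNge; apply/negP => Dw.
have : w <= z by apply: sup_upper_bound => //; split; rewrite ?wy ?(le_trans sz (ltW zw)).
lra.
Qed.

Let measurable_d : measurable_fun `[0, T] d.
Proof. by apply/measurable_EFinP; exact: measurable_int d_int. Qed.

Definition posd s := if 0 < D s then d s else 0.

Definition thin_absd (del : R) s := if (0 < D s) && (D s < del) then `|d s| else 0.

Lemma measurable_posd : measurable_fun `[0, T] posd.
Proof.
apply: measurable_fun_if => //.
  by apply: measurable_fun_ltr => //; exact: measurable_primitive.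
by apply: measurable_funS measurable_d => //; exact: subIsetl.
Qed.

Lemma measurable_thin_absd del : measurable_fun `[0, T] (thin_absd del).
Proof.
apply: measurable_fun_if => //.
  by apply: measurable_and; apply: measurable_fun_ltr => //; exact: measurable_primitive.
apply: measurableT_comp => //; apply: measurable_funS measurable_d => //; exact: subIsetl.
Qed.

Lemma integrable_posd : mu.-integrable `[0, T] (EFin \o posd).
Proof.
apply: (le_integrable _ _ _ d_int) => //; first by apply/measurable_EFinP; exact: measurable_posd.
by move=> x _ /=; rewrite lee_fin /posd; case: ifP; rewrite ?normr0.
Qed.

Lemma integrable_thin_absd del : mu.-integrable `[0, T] (EFin \o thin_absd del).
Proof.
apply: (le_integrable _ _ _ d_int) => //.
  by apply/measurable_EFinP; exact: measurable_thin_absd.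
by move=> x _ /=; rewrite lee_fin /thin_absd; case: ifP; rewrite ?normr_id ?normr0.
Qed.

Lemma thin_absd_integral_ge0 del x y : 0 <= \int[mu]_(s in `]x, y]) thin_absd del s.
Proof. by apply: Rintegral_ge0 => w _; rewrite /thin_absd; case: ifP. Qed.

Definition defect t := Num.max (D t) 0 - \int[mu]_(s in `[0, t]) posd s.

Definition thin_mass del t := \int[mu]_(s in `[0, t]) thin_absd del s.

Lemma defectB x y : 0 <= x -> x <= y -> y <= T ->
  defect y - defect x =
  Num.max (D y) 0 - Num.max (D x) 0 - \int[mu]_(s in `]x, y]) posd s.
Proof.
by move=> x0 xy yT; rewrite /defect (Rintegral_itv_split integrable_posd x0 xy yT); lra.
Qed.

Lemma thin_massB del x y : 0 <= x -> x <= y -> y <= T ->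
  thin_mass del y - thin_mass del x = \int[mu]_(s in `]x, y]) thin_absd del s.
Proof.
move=> x0 xy yT; rewrite /thin_mass.
by rewrite (Rintegral_itv_split (integrable_thin_absd del) x0 xy yT); lra.
Qed.

Lemma defect0 : defect 0 = Num.max D0 0.
Proof. by rewrite /defect DE // !set_itv1 !Rintegral_set1 addr0 subr0. Qed.

Lemma thin_mass0 del : thin_mass del 0 = 0.
Proof. by rewrite /thin_mass set_itv1 Rintegral_set1. Qed.

Lemma defectB_neg s y : 0 <= s -> s <= y -> y <= T ->
  (forall w, s <= w -> w <= y -> D w < 0) -> defect y = defect s.
Proof.
move=> s0 sy yT Dneg; apply/eqP; rewrite -subr_eq0 defectB //.
rewrite (max_idPr (ltW (Dneg y sy (lexx y)))) (max_idPr (ltW (Dneg s (lexx s) sy))).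
rewrite (@eq_Rintegral _ _ _ mu _ (cst 0)) ?Rintegral_cst ?mul0r ?subrr ?subr0 // => w.
rewrite inE /= in_itv /= => /andP[sw wy].
by rewrite /posd ifF //; apply/negbTE; rewrite -leNgt ltW // Dneg // ltW.
Qed.

Lemma defectB_pos s y : 0 <= s -> s <= y -> y <= T ->
  (forall w, s <= w -> w <= y -> 0 < D w) -> defect y = defect s.
Proof.
move=> s0 sy yT Dpos; apply/eqP; rewrite -subr_eq0 defectB //.
rewrite (max_idPl (ltW (Dpos y sy (lexx y)))) (max_idPl (ltW (Dpos s (lexx s) sy))).
rewrite (@eq_Rintegral _ _ _ mu _ d) -?primitiveB ?subrr // => w.
by rewrite inE /= in_itv /= => /andP[sw wy]; rewrite /posd Dpos // ltW.
Qed.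

Lemma defectB_small del s y : 0 <= s -> s <= y -> y <= T -> D s = 0 ->
  (forall w, s <= w -> w <= y -> `|D w| < del) ->
  `|defect y - defect s| <= 2 * (thin_mass del y - thin_mass del s).
Proof.
move=> s0 sy yT Ds Dsmall.
have posd_thin x : s <= x -> x <= y ->
    `|\int[mu]_(w in `]x, y]) posd w| <= \int[mu]_(w in `]x, y]) thin_absd del w.
  move=> sx xy; have x0 := le_trans s0 sx.
  have ipos := integrable_itv_oc integrable_posd x0 yT.
  apply: le_trans (le_normr_Rintegral _ ipos) _ => //.
  apply: le_Rintegral => //.
  - exact: integrable_norm ipos.
  - exact: integrable_itv_oc (integrable_thin_absd del) x0 yT.
  - move=> w; rewrite /= in_itv /= => /andP[xw wy].
    have := Dsmall w (le_trans sx (ltW xw)) wy.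
    rewrite /posd /thin_absd ltr_norml; case: ifP => Dw /=; last by rewrite normr0.
    by move=> /andP[_ ->].
(* Beyond the last point z <= y where D <= 0, D increases only through posd. *)
have max_le : Num.max (D y) 0 <= \int[mu]_(w in `]s, y]) thin_absd del w.
  have [Dy|Dy] := leP (D y) 0; first exact: thin_absd_integral_ge0.
  have [z [sz zy Dz Dpos]] := last_nonpos s0 sy yT (ltac:(by rewrite Ds)).
  have [z0 zT] := (le_trans s0 sz, le_trans zy yT).
  have Dyz : D y - D z = \int[mu]_(w in `]z, y]) posd w.
    rewrite primitiveB //; apply: eq_Rintegral => w.
    by rewrite inE /= in_itv /= => /andP[zw wy]; rewrite /posd Dpos.
  have Jzy_le : \int[mu]_(w in `]z, y]) thin_absd del w <=
                \int[mu]_(w in `]s, y]) thin_absd del w.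
    rewrite -!thin_massB // lerD2l lerN2 -subr_ge0 thin_massB //.
    exact: thin_absd_integral_ge0.
  apply: le_trans Jzy_le; apply: le_trans (posd_thin z sz zy).
  by apply: le_trans (ler_norm _); rewrite -Dyz lerDl oppr_ge0.
rewrite defectB // thin_massB // Ds maxxx subr0.
have := posd_thin s (lexx s) sy.
have m0 : 0 <= Num.max (D y) 0 by rewrite le_max lexx orbT.
move=> h; apply: (le_trans (ler_normB _ _)); rewrite (ger0_norm m0); lra.
Qed.

Lemma defect_local del : 0 < del -> forall s, 0 <= s -> s < T ->
  exists2 eta : R, 0 < eta & forall y, s <= y -> y <= T -> y - s < eta ->
    `|defect y - defect s| <= 2 * (thin_mass del y - thin_mass del s).
Proof.
move=> del0 s s0 sT.
have Dnear e : 0 < e -> exists2 eta : R, 0 < eta & forall y, s <= y -> y <= T ->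
    y - s < eta -> forall w, s <= w -> w <= y -> `|D w - D s| < e.
  move=> e0; have [eta eta0 Dcont] := primitive_cont s0 (ltW sT) e0.
  exists eta => // y sy yT ys w sw wy.
  by apply: Dcont; rewrite ?(le_trans s0 sw) ?(le_trans wy yT) // ger0_norm ?subr_ge0 //; lra.
have mass_ge0 y : s <= y -> y <= T -> 0 <= 2 * (thin_mass del y - thin_mass del s).
  by move=> sy yT; rewrite thin_massB // mulr_ge0 // thin_absd_integral_ge0.
have [Ds|Ds|Ds] := ltgtP (D s) 0.
- have [eta eta0 near_s] := Dnear (- D s) (ltac:(by rewrite oppr_gt0)).
  exists eta => // y sy yT ys; rewrite (defectB_neg s0 sy yT) ?subrr ?normr0 ?mass_ge0 //.
  by move=> w sw wy; have := near_s y sy yT ys w sw wy; rewrite ltr_norml => /andP[_]; lra.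
- have [eta eta0 near_s] := Dnear (D s) Ds.
  exists eta => // y sy yT ys; rewrite (defectB_pos s0 sy yT) ?subrr ?normr0 ?mass_ge0 //.
  by move=> w sw wy; have := near_s y sy yT ys w sw wy; rewrite ltr_norml => /andP[+ _]; lra.
- have [eta eta0 near_s] := Dnear del del0.
  exists eta => // y sy yT ys; apply: defectB_small => // w sw wy.
  by have := near_s y sy yT ys w sw wy; rewrite Ds subr0.
Qed.

Lemma defect_lipschitz x y : 0 <= x -> x <= y -> y <= T ->
  `|defect y - defect x| <= 2 * \int[mu]_(s in `]x, y]) `|d s|.
Proof.
move=> x0 xy yT; have ixy := integrable_itv_oc d_int x0 yT.
have ipos := integrable_itv_oc integrable_posd x0 yT.
rewrite defectB //; apply: (le_trans (ler_normB _ _)).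
have posd_le : `|\int[mu]_(s in `]x, y]) posd s| <= \int[mu]_(s in `]x, y]) `|d s|.
  apply: (le_trans (le_normr_Rintegral _ ipos)) => //.
  apply: le_Rintegral => //; try exact: integrable_norm.
  by move=> w _; rewrite /posd; case: ifP; rewrite ?normr0.
have max_le : `|Num.max (D y) 0 - Num.max (D x) 0| <= \int[mu]_(s in `]x, y]) `|d s|.
  by apply: (le_trans (dist_maxr0_le _ _)); rewrite primitiveB //; exact: le_normr_Rintegral.
by rewrite mulr_natl mulr2n; exact: lerD.
Qed.

Lemma thin_massB_le del x y : 0 <= x -> x <= y -> y <= T ->
  thin_mass del y - thin_mass del x <= \int[mu]_(s in `]x, y]) `|d s|.
Proof.
move=> x0 xy yT; rewrite thin_massB //; apply: le_Rintegral => //.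
- exact: integrable_itv_oc (integrable_thin_absd del) x0 yT.
- exact/integrable_norm/(integrable_itv_oc d_int x0 yT).
- by move=> w _; rewrite /thin_absd; case: ifP.
Qed.

Lemma thin_mass_defect_uniform_cont del (sg : R) : `|sg| = 1 ->
  forall e : R, 0 < e -> exists2 eta : R, 0 < eta &
    forall x y, 0 <= x -> x <= y -> y <= T -> y - x < eta ->
      `|(2 * thin_mass del y + sg * defect y) - (2 * thin_mass del x + sg * defect x)| < e.
Proof.
move=> sg1 e e0; have e4 : 0 < e / 4 by rewrite divr_gt0.
have [eta eta0 small] := integral_itv_abs_small d_int e4.
exists eta => // x y x0 xy yT yx.
have := small x y x0 xy yT yx.
have := defect_lipschitz x0 xy yT.
have := thin_massB_le del x0 xy yT.
have := thin_massB del x0 xy yT.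
have := thin_absd_integral_ge0 del x y.
set H := thin_mass del y - thin_mass del x; set P := defect y - defect x.
move=> H0 HE Hle Plip Je.
have -> : 2 * thin_mass del y + sg * defect y - (2 * thin_mass del x + sg * defect x) =
  2 * H + sg * P by rewrite /H /P; ring.
apply: le_lt_trans (ler_normD _ _) _.
rewrite !normrM sg1 mul1r ger0_norm // ger0_norm; lra.
Qed.

Lemma defect_bound del t : 0 < del -> 0 <= t -> t <= T ->
  `|defect t - Num.max D0 0| <= 2 * thin_mass del t.
Proof.
move=> del0 t0 tT.
have G_le (sg : R) : `|sg| = 1 ->
    2 * thin_mass del 0 + sg * defect 0 <= 2 * thin_mass del t + sg * defect t.
  move=> sg1; pose G u := 2 * thin_mass del u + sg * defect u.
  apply: (@right_nondecreasing_le _ G) => // [y _ yt e e0|s s0 st].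
  - have [eta eta0 Gcont] := thin_mass_defect_uniform_cont del sg1 e0.
    by exists eta => // x x0 xy; apply: Gcont => //; exact: le_trans yt tT.
  - have [eta eta0 loc] := defect_local del0 s0 (lt_le_trans st tT).
    exists eta => // y sy yt ys.
    have := loc y sy (le_trans yt tT) ys.
    have : - `|defect y - defect s| <= sg * (defect y - defect s).
      by apply: lerNnormlW; rewrite normrM sg1 mul1r.
    rewrite /G; lra.
have := G_le 1 (normr1 _); have := G_le (-1) (normrN1 _).
rewrite defect0 thin_mass0 ler_norml => h1 h2; apply/andP; split; lra.
Qed.

Lemma thin_mass_small t : 0 <= t -> t <= T -> forall e : R, 0 < e ->
  exists2 del : R, 0 < del & thin_mass del t < e.
Proof.
move=> t0 tT e e0.
have sub : `[0, t] `<=` `[0, T] by apply: subset_itvl; rewrite bnd_simp.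
pose f_ n := EFin \o thin_absd n.+1%:R^-1.
have mf_ n : measurable_fun `[0, t] (f_ n).
  by apply/measurable_EFinP; apply: measurable_funS (measurable_thin_absd _).
have ig : mu.-integrable `[0, t] (EFin \o (Num.norm \o d)).
  by apply: integrable_norm; apply: integrableS d_int.
have f_cvg : {ae mu, forall x, `[0, t]%classic x -> f_ ^~ x @ \oo --> 0%E}.
  apply: aeW => x _ /=; apply: cvg_near_cst.
  have [Dx|Dx] := ltP 0 (D x); last first.
    by apply: nearW => n; rewrite /f_ /= /thin_absd ltNge Dx.
  near=> n; rewrite /f_ /= /thin_absd Dx /= ifF //; apply/negbTE; rewrite -leNgt ltW //.
  by near: n; exact: (near_infty_natSinv_lt (PosNum Dx)).
have f_dom : {ae mu, forall x n, `[0, t]%classic x ->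
    (`|f_ n x| <= (EFin \o (Num.norm \o d)) x)%E}.
  apply: aeW => x n _ /=; rewrite lee_fin /thin_absd.
  by case: ifP; rewrite ?normr_id ?normr0.
have [_ _] := @dominated_convergence _ _ _ mu _ (measurable_itv `[0, t]) f_ (fun=> 0%E)
  _ mf_ (measurable_cst _) f_cvg ig f_dom.
rewrite integral0 => /fine_cvgP [_] /cvgrPdist_lt /(_ e e0) [n _ small].
exists n.+1%:R^-1; first by rewrite invr_gt0.
by have := small n (leqnn n); rewrite /= sub0r normrN; apply: le_lt_trans; exact: ler_norm.
Unshelve. all: by end_near.
Qed.

Lemma maxr0_primitive t : 0 <= t -> t <= T ->
  Num.max (D t) 0 = Num.max D0 0 + \int[mu]_(s in `[0, t]) posd s.
Proof.
move=> t0 tT; apply/eqP; rewrite -subr_eq0 -normr_eq0 eq_le normr_ge0 andbT.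
apply/ler_addgt0Pr => e e0; rewrite add0r.
have [del del0 small] := thin_mass_small t0 tT (ltac:(by rewrite divr_gt0) : 0 < e / 2).
have := defect_bound del0 t0 tT.
have -> : defect t - Num.max D0 0 =
  Num.max (D t) 0 - (Num.max D0 0 + \int[mu]_(s in `[0, t]) posd s) by rewrite /defect; ring.
lra.
Qed.

End PositivePart.

Section ConditionalSwap.
Context {R : realType} {N : nat}.
Local Notation mu := (@lebesgue_measure R).

Definition cswap (i j : 'I_N) (x v : 'I_N -> R) : 'I_N -> R :=
  if x i < x j then (fun k => v (tperm i j k)) else v.

Definition tperm_coef (i j k : 'I_N) : R := (k == i)%:R - (k == j)%:R.

Lemma tperm_shift (i j k : 'I_N) (v : 'I_N -> R) :
  v (tperm i j k) = v k + tperm_coef i j k * (v j - v i).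
Proof.
have [<-|ij] := eqVneq i j; first by rewrite tperm1 perm1 subrr mulr0 addr0.
rewrite /tperm_coef; case: tpermP => [->|->|/eqP/negbTE -> /eqP/negbTE ->].
- by rewrite eqxx (negbTE ij) subr0 mul1r addrC subrK.
- by rewrite eqxx eq_sym (negbTE ij) sub0r mulN1r opprB addrC subrK.
- by rewrite subrr mul0r addr0.
Qed.

Lemma cswap_shift i j x k :
  cswap i j x x k = x k + tperm_coef i j k * Num.max (x j - x i) 0.
Proof.
rewrite /cswap; case: ifP => xij.
  by rewrite tperm_shift (max_idPl (ltW _)) // subr_gt0.
by rewrite (max_idPr _) ?mulr0 ?addr0 // subr_le0 leNgt xij.
Qed.

Lemma sum_cswap i j x v (F : R -> R) :
  \sum_(k < N) F (cswap i j x v k) = \sum_(k < N) F (v k).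
Proof.
rewrite /cswap; case: ifP => // _.
by rewrite [RHS](reindex_inj (@perm_inj _ (tperm i j))).
Qed.

Lemma mean_cswap i j x v : mean (cswap i j x v) = mean v.
Proof. by rewrite /mean (sum_cswap i j x v id). Qed.

Lemma Vfun_cswap i j x v : Vfun (cswap i j x v) = Vfun v.
Proof. by rewrite /Vfun (sum_cswap i j x v (fun r => r ^+ 2)). Qed.

Lemma rhs_cswap i j A X k s :
  rhs (fun s => cswap i j (X s) (A s)) (fun s => cswap i j (X s) (X s)) k s =
  rhs A X k s + tperm_coef i j k *
    (if X s i < X s j then rhs A X j s - rhs A X i s else 0).
Proof.
rewrite /rhs mean_cswap /cswap; case: ifP => _ /=; last by rewrite mulr0 addr0.
by rewrite (tperm_shift _ _ _ (X s)) (tperm_shift _ _ _ (A s)); ring.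
Qed.

Variables (T M : R) (xi0 : 'I_N -> R).
Hypothesis T_ge0 : 0 <= T.

Lemma is_solutionE A X : is_solution T xi0 A X <->
  forall l t, 0 <= t -> t <= T ->
    mu.-integrable `[0, t] (EFin \o rhs A X l) /\
    X t l = xi0 l + \int[mu]_(s in `[0, t]) rhs A X l s.
Proof.
have RintE t l : mu.-integrable `[0, t] (EFin \o rhs A X l) ->
    (\int[mu]_(s in `[0%R, t]) (rhs A X l s)%:E)%E = (\int[mu]_(s in `[0, t]) rhs A X l s)%:E.
  by move=> il; rewrite /Rintegral fineK //; exact: integrable_fin_num.
split=> sol l t.
  move=> t0 tT; have [il] := sol l t (ltac:(by rewrite t0 tT)).
  by rewrite RintE // => -[<-]; split=> //; ring.
move=> /andP[t0 tT]; have [il Xt] := sol l t t0 tT.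
by split=> //; rewrite RintE // Xt; congr EFin; ring.
Qed.

Lemma measurable_solution A X l : is_solution T xi0 A X ->
  measurable_fun `[0, T] (fun s => X s l).
Proof.
move=> /is_solutionE sol; have [il _] := sol l T T_ge0 (lexx T).
by apply: (@measurable_primitive _ T (xi0 l) _ _ T_ge0 il) => t t0 tT; have [] := sol l t t0 tT.
Qed.

Lemma cswap_admissible i j A X : admissible T M A -> is_solution T xi0 A X ->
  admissible T M (fun s => cswap i j (X s) (A s)).
Proof.
move=> [mA bA] sol; split=> [k|t tT].
  apply: (eq_measurable_fun (fun s => if X s i < X s j then A s (tperm i j k) else A s k)).
    by move=> s _; rewrite /cswap; case: ifP.
  apply: measurable_fun_if => //.
  - by apply: measurable_fun_ltr; exact: measurable_solution sol.
  - by apply: measurable_funS (mA _) => //; exact: subIsetl.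
  - by apply: measurable_funS (mA _) => //; exact: subIsetl.
have [A01 AM] := bA t tT; split; last by rewrite (sum_cswap i j _ _ id).
by move=> k; rewrite /cswap; case: ifP.
Qed.

Lemma cswap_solution i j A X : xi0 j <= xi0 i -> is_solution T xi0 A X ->
  is_solution T xi0 (fun s => cswap i j (X s) (A s)) (fun s => cswap i j (X s) (X s)).
Proof.
move=> xi0_ji /is_solutionE sol; apply/is_solutionE => k t t0 tT.
pose g l := rhs A X l.
have g_int l t' : 0 <= t' -> t' <= T -> mu.-integrable `[0, t'] (EFin \o g l).
  by move=> t'0 t'T; have [] := sol l t' t'0 t'T.
pose d s := g j s - g i s.
pose D s := X s j - X s i.
have d_int t' : 0 <= t' -> t' <= T -> mu.-integrable `[0, t'] (EFin \o d).
  by move=> t'0 t'T; exact: (integrableB _ (g_int j t' t'0 t'T) (g_int i t' t'0 t'T)).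
have DE t' : 0 <= t' -> t' <= T -> D t' = (xi0 j - xi0 i) + \int[mu]_(s in `[0, t']) d s.
  move=> t'0 t'T; rewrite /D /d RintegralB ?g_int //.
  by have [_ ->] := sol j t' t'0 t'T; have [_ ->] := sol i t' t'0 t'T; ring.
have maxE := maxr0_primitive T_ge0 (d_int T T_ge0 (lexx T)) DE t0 tT.
have D0_le0 : xi0 j - xi0 i <= 0 by rewrite subr_le0.
rewrite (max_idPr D0_le0) add0r in maxE.
have posd_int : mu.-integrable `[0, t] (EFin \o posd d D).
  apply: integrableS (integrable_posd T_ge0 (d_int T T_ge0 (lexx T)) DE) => //.
  by apply: subset_itvl; rewrite bnd_simp.
have -> : rhs (fun s => cswap i j (X s) (A s)) (fun s => cswap i j (X s) (X s)) k =
    (fun s => g k s + tperm_coef i j k * posd d D s).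
  by apply/funext => s; rewrite rhs_cswap /posd /D subr_gt0.
have gZ_int : mu.-integrable `[0, t] (EFin \o (fun s => tperm_coef i j k * posd d D s)).
  exact: (integrableZl _ _ posd_int).
split; first exact: (integrableD _ (g_int k t t0 tT) gZ_int).
rewrite RintegralD ?g_int // RintegralZl // -maxE cswap_shift.
by have [_ ->] := sol k t t0 tT; ring.
Qed.

End ConditionalSwap.

Section SelectionSort.
Context {R : realType} {N : nat}.
(* The values of the trajectory and of the control at one time. *)
Local Notation state := (('I_N -> R) * ('I_N -> R))%type.

Definition cswap_pair (i j : 'I_N) (xv : state) : state :=
  (cswap i j xv.1 xv.1, cswap i j xv.1 xv.2).

Definition selection_stage (i : 'I_N) (xv : state) : state :=
  foldl (fun yv j => cswap_pair i j yv) xv [seq j : 'I_N <- enum 'I_N | (i < j)%N].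

Definition selection_sort (xv : state) : state :=
  foldl (fun yv i => selection_stage i yv) xv (enum 'I_N).

Definition head_max (p : 'I_N) (x : 'I_N -> R) := forall q : 'I_N, (p < q)%N -> x q <= x p.

Lemma cswap_head_max (p i j : 'I_N) x : (p < i)%N -> (p < j)%N ->
  head_max p x -> head_max p (cswap i j x x).
Proof.
move=> pi pj px; rewrite /cswap; case: ifP => // _ q pq.
have -> : tperm i j p = p.
  by apply: tpermD; apply/eqP => pE; rewrite pE ltnn in pi pj.
by case: tpermP => [_|_|_ _]; apply: px.
Qed.

Lemma selection_stage_head_max_keep (p i : 'I_N) xv : (p < i)%N ->
  head_max p xv.1 -> head_max p (selection_stage i xv).1.
Proof.
move=> pi; rewrite /selection_stage.
have : all (fun j : 'I_N => (i < j)%N) [seq j : 'I_N <- enum 'I_N | (i < j)%N] := filter_all _ _.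
elim: [seq j : 'I_N <- enum 'I_N | (i < j)%N] xv => //= j l IH xv /andP[ij il] px.
by apply: IH il _; exact: cswap_head_max (ltn_trans pi ij) px.
Qed.

Lemma selection_stage_head_max (i : 'I_N) xv : head_max i (selection_stage i xv).1.
Proof.
suff inv : forall l l0 : seq 'I_N, forall yv : state,
    (forall q : 'I_N, q \in l0 -> (i < q)%N -> yv.1 q <= yv.1 i) ->
    forall q : 'I_N, q \in l0 ++ l -> (i < q)%N ->
      (foldl (fun yv j => cswap_pair i j yv) yv l).1 q <=
      (foldl (fun yv j => cswap_pair i j yv) yv l).1 i.
  by move=> q iq; apply: (inv _ [::]) => //; rewrite mem_filter iq mem_enum.
elim=> [|j l IH] l0 yv yv_max q; first by rewrite cats0; exact: yv_max.
rewrite -cat_rcons => ql iq /=; apply: IH ql iq => {}q.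
rewrite /= mem_rcons inE => /orP[/eqP ->|ql0] iq; rewrite /cswap.
  by case: ifP => xij /=; [rewrite tpermR tpermL ltW | rewrite leNgt xij].
have qi : q != i by apply/eqP => qE; rewrite qE ltnn in iq.
case: ifP => [xij|_] /=; last exact: yv_max.
have [->|qj] := eqVneq q j; first by rewrite tpermR tpermL ltW.
by rewrite tpermL tpermD 1?eq_sym //; exact: le_trans (yv_max q ql0 iq) (ltW xij).
Qed.

Lemma pairwise_ltn_enum_ord : pairwise (fun a b : 'I_N => (a < b)%N) (enum 'I_N).
Proof.
have := iota_ltn_sorted 0 N; rewrite (sorted_pairwise ltn_trans) -val_enum_ord.
by rewrite pairwise_map.
Qed.

Lemma selection_sort_sorted xv (p q : 'I_N) :
  (p < q)%N -> (selection_sort xv).1 q <= (selection_sort xv).1 p.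
Proof.
suff inv : forall L, pairwise (fun a b : 'I_N => (a < b)%N) L -> forall yv (p : 'I_N),
    p \in L -> head_max p (foldl (fun yv i => selection_stage i yv) yv L).1.
  by move=> pq; apply: (inv _ pairwise_ltn_enum_ord) => //; rewrite mem_enum.
elim/last_ind => [//|L i IH] + yv {}p.
rewrite pairwise_rcons => /andP[/allP Li L_sorted].
rewrite foldl_rcons mem_rcons inE => /orP[/eqP ->|pL]; first exact: selection_stage_head_max.
by apply: selection_stage_head_max_keep; [exact: Li | exact: IH].
Qed.

Variables (T M : R) (xi0 : 'I_N -> R).
Hypotheses (T_ge0 : 0 <= T) (xi0_sorted : forall i j : 'I_N, (i < j)%N -> xi0 j <= xi0 i).

Definition preserves_problem (f : state -> state) :=
  forall Z : R -> state,
    admissible T M (fun s => (Z s).2) -> is_solution T xi0 (fun s => (Z s).2) (fun s => (Z s).1) ->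
  [/\ admissible T M (fun s => (f (Z s)).2),
      is_solution T xi0 (fun s => (f (Z s)).2) (fun s => (f (Z s)).1) &
      Vfun (f (Z T)).1 = Vfun (Z T).1].

Lemma preserves_cswap_pair (i j : 'I_N) : (i < j)%N -> preserves_problem (cswap_pair i j).
Proof.
move=> ij Z adm sol; split=> /=.
- exact: (cswap_admissible T_ge0 i j adm sol).
- exact: (cswap_solution T_ge0 (xi0_sorted ij) sol).
- exact: Vfun_cswap.
Qed.

Lemma preserves_foldl (I : eqType) (F : I -> state -> state) (l : seq I) :
  (forall a, a \in l -> preserves_problem (F a)) ->
  preserves_problem (fun xv => foldl (fun yv a => F a yv) xv l).
Proof.
elim: l => [_ Z adm sol|a l IH Fl Z adm sol] /=; first by split.
have [adm1 sol1 V1] := Fl a (mem_head a l) Z adm sol.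
have Fl' b : b \in l -> preserves_problem (F b) by move=> bl; apply: Fl; rewrite inE bl orbT.
by have [] := IH Fl' _ adm1 sol1; rewrite V1.
Qed.

Lemma preserves_selection_sort : preserves_problem selection_sort.
Proof.
apply: preserves_foldl => i _; apply: preserves_foldl => j.
by rewrite mem_filter => /andP[ij _]; exact: preserves_cswap_pair.
Qed.

End SelectionSort.

Theorem lemma1 (R : realType) (N : nat) (T M : R) (xi0 : 'I_N -> R)
  (HN : (1 <= N)%N) (HT : 0 < T) (HM : 0 < M)
  (Hmean : 0 < mean xi0)
  (Hord : forall i j : 'I_N, (i < j)%N -> xi0 j <= xi0 i)
  (Hex : exists a xi, optimal T M xi0 a xi) :
  exists (a : R -> 'I_N -> R) (xi : R -> 'I_N -> R),
    optimal T M xi0 a xi /\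
    forall t : R, 0 <= t <= T ->
      forall i j : 'I_N, (i < j)%N -> xi t j <= xi t i.
Proof.
have [a [xi [adm [sol opt]]]] := Hex.
have [adm' sol' V'] :=
  preserves_selection_sort (ltW HT) Hord (Z := fun s => (xi s, a s)) adm sol.
exists (fun s => (selection_sort (xi s, a s)).2), (fun s => (selection_sort (xi s, a s)).1).
split=> [|t _ i j]; last exact: selection_sort_sorted.
do 2!split=> //; move=> b eta admb solb.
by rewrite V'; exact: (opt b eta admb solb).
Qed.
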